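(* Let $\boldsymbol\mu>\mathbf 0$ and let $\hat{\mathbf G},\tilde{\mathbf G}\in\mathcal G(\boldsymbol\mu)$ correspond to choices $(\hat k_1,\dots,\hat k_N)$ and $(\tilde k_1,\dots,\tilde k_N)$ that differ in exactly one index $i$ (i.e. $\hat k_i\neq\tilde k_i$ and $\hat k_j=\tilde k_j$ for $j\neq i$). Assume $\mathbf I-\hat{\mathbf G}$ and $\mathbf I-\tilde{\mathbf G}$ are irreducible and $\lambda(\mathbf I-\hat{\mathbf G})<1$, $\lambda(\mathbf I-\tilde{\mathbf G})<1$, and let $\hat{\mathbf p}=\hat{\mathbf G}^{-1}\mathbf n_{\hat{\mathbf G}}$, $\tilde{\mathbf p}=\tilde{\mathbf G}^{-1}\mathbf n_{\tilde{\mathbf G}}$. Then there exists $\mathbf p\in\{\hat{\mathbf p},\tilde{\mathbf p}\}$ such that $\hat{\mathbf G}\mathbf p\geq\mathbf n_{\hat{\mathbf G}}$ and $\tilde{\mathbf G}\mathbf p\geq\mathbf n_{\tilde{\mathbf G}}$.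
   Context: Multicast system: $N$ transmitters; transmitter $T_i$ has $K_i\geq1$ receivers $R_i^{k}$, $k\in\mathcal K_i=\{1,\dots,K_i\}$. Channel gains $g_{r_i^{k},t_j}\geq 0$ (from $T_j$ to $R_i^k$) with $g_{r_i^{k},t_i}>0$; noise variance $\sigma^2>0$. For $\boldsymbol\mu\in\mathbb R^N$, $\mathbf a_i^{k}(\boldsymbol\mu)\in\mathbb R^{1\times N}$ is the row vector with $i$-th entry $1$ and $j$-th entry $-\mu_i g_{r_i^{k},t_j}/g_{r_i^{k},t_i}$ for $j\neq i$; $n_i^{k}(\boldsymbol\mu)=\mu_i\sigma^2/g_{r_i^{k},t_i}$. $\mathcal G(\boldsymbol\mu)$ is the set of $N\times N$ matrices whose $i$-th row is $\mathbf a_i^{k_i}(\boldsymbol\mu)$ for a choice $k_i\in\mathcal K_i$ ($i=1,\dots,N$); for such $\mathbf G$, $\mathbf n_{\mathbf G}=(n_1^{k_1}(\boldsymbol\mu),\dots,n_N^{k_N}(\boldsymbol\mu))^T$. $\lambda(\cdot)$ is the Perron–Frobenius eigenvalue (spectral radius). Inequalities are componentwise. *)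

(* Scalars range over an arbitrary real closed field R
   (the paper works over the reals). *)
From HB Require Import structures.
From mathcomp Require Import all_boot all_order all_algebra.
Set Implicit Arguments. Unset Strict Implicit. Unset Printing Implicit Defensive.
Import Order.TTheory GRing.Theory Num.Theory.
Local Open Scope ring_scope.

Section Multicast.
Variable R : rcfType.
Variable N : nat.

(* Perron--Frobenius eigenvalue of a (nonnegative) square matrix A:
   the largest real eigenvalue of A.  For a nonnegative matrix this is
   the spectral radius (Perron--Frobenius theorem). *)
Definition is_PF_eigenvalue (A : 'M[R]_N) (r : R) : Prop :=
  eigenvalue A r /\ (forall s, eigenvalue A s -> s <= r).

Definition PF_lt1 (A : 'M[R]_N) : Prop :=
  exists r, is_PF_eigenvalue A r /\ r < 1.

Definition irreducible_mx (A : 'M[R]_N) : Prop :=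
  forall i j : 'I_N, connect (fun i j : 'I_N => A i j != 0) i j.

(* Data: K i receivers for transmitter i; g i k j = gain from T_j to R_i^k *)
Variable K : 'I_N -> nat.
Variable g : forall i : 'I_N, 'I_(K i) -> 'I_N -> R.
Variable sigma2 : R.

Definition a_row (mu : 'I_N -> R) (i : 'I_N) (k : 'I_(K i)) : 'rV[R]_N :=
  \row_j (if j == i then 1 else - (mu i * g k j / g k i)).

Definition n_entry (mu : 'I_N -> R) (i : 'I_N) (k : 'I_(K i)) : R :=
  mu i * sigma2 / g k i.

(* the matrix G in G(mu) associated with a choice (k_1,...,k_N) *)
Definition Gmat (mu : 'I_N -> R) (c : forall i : 'I_N, 'I_(K i)) : 'M[R]_N :=
  \matrix_(i, j) a_row mu (c i) 0 j.

Definition nvec (mu : 'I_N -> R) (c : forall i : 'I_N, 'I_(K i)) : 'cV[R]_N :=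
  \col_i n_entry mu (c i).

End Multicast.

(* Since lambda(I - G) < 1, the characteristic polynomial of I - G, a monic
   polynomial, has no root in [1, +oo) and is therefore positive at 1: det G > 0
   for both matrices.  When G and G' differ only in row i, the cofactors along
   row i agree, so (G' adj G)_ii = det G'.  With p = G^-1 n and p' = G'^-1 n',
   this yields
     (n_i - (G p')_i) det G' = ((G' p)_i - n'_i) det G,
   so the two residuals in row i have the same sign; every other row holds with
   equality for both vectors.  If the common sign is nonnegative p is feasible
   for both systems, otherwise p' is. *)

From HB Require Import structures.
From mathcomp Require Import all_boot all_order all_algebra.
From mathcomp Require Import polyrcf.
Import Order.TTheory GRing.Theory Num.Theory.
Local Open Scope ring_scope.

Lemma horner_char_poly (F : fieldType) n (A : 'M[F]_n) a :
  (char_poly A).[a] = \det (a%:M - A).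
Proof.
rewrite /char_poly /determinant horner_sum; apply: eq_bigr => s _.
rewrite hornerM horner_exp !hornerE; congr (_ * _).
rewrite (big_morph _ (fun p q => hornerM p q a) (hornerC 1 a)).
by apply: eq_bigr => i _; rewrite !mxE !(hornerE, hornerMn).
Qed.

Lemma monic_root_ge (R : rcfType) (p : {poly R}) a :
  p \is monic -> p.[a] <= 0 -> exists2 x, a <= x & root p x.
Proof.
move=> /monicP lc_p pa_le0.
have [b0 hb0] : exists b0, forall x, b0 <= x -> 1 <= p.[x].
  by rewrite -lc_p; apply: poly_pinfty_gt_lc; rewrite lc_p ltr01.
set b := Num.max a b0.
have le_ab : a <= b by rewrite le_max lexx.
have pb_ge0 : 0 <= p.[b] by apply: le_trans ler01 (hb0 _ _); rewrite le_max lexx orbT.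
have sign_change : p.[a] <= 0 <= p.[b] by rewrite pa_le0 pb_ge0.
have [x /andP[le_ax _] px0] := poly_ivt le_ab sign_change.
by exists x.
Qed.

Lemma det_subr_gt0 (R : rcfType) n (A : 'M[R]_n) :
  (forall s, eigenvalue A s -> s < 1) -> 0 < \det (1%:M - A).
Proof.
move=> eig_lt1; rewrite ltNge; apply/negP => det_le0.
have [|x le1x] := @monic_root_ge _ (char_poly A) 1 (char_poly_monic A).
  by rewrite horner_char_poly.
by rewrite -eigenvalue_root_char => /eig_lt1; rewrite ltNge le1x.
Qed.

Lemma PF_lt1_det_gt0 (R : rcfType) n (G : 'M[R]_n) :
  PF_lt1 (1%:M - G) -> 0 < \det G.
Proof.
move=> [r [[_ le_r] lt_r1]].
have -> : G = 1%:M - (1%:M - G) by rewrite opprB addrC subrK.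
by apply: det_subr_gt0 => s /le_r /le_lt_trans; apply.
Qed.

Section RowChange.
Variables (F : fieldType) (n : nat) (G G' : 'M[F]_n) (i : 'I_n).
Hypothesis eq_off_i : forall j k, j != i -> G j k = G' j k.

Lemma cofactor_row_change j : cofactor G' i j = cofactor G i j.
Proof.
rewrite /cofactor; congr (_ * \det _); apply/matrixP => a b.
by rewrite !mxE eq_off_i // eq_sym neq_lift.
Qed.

Lemma mul_adj_row_change : (G' *m \adj G) i i = \det G'.
Proof.
rewrite mxE (expand_det_row G' i); apply: eq_bigr => j _.
by rewrite mxE cofactor_row_change.
Qed.

Variables (v v' : 'cV[F]_n).
Hypothesis eqv_off_i : forall j, j != i -> v j 0 = v' j 0.
Hypotheses (G_unit : G \in unitmx) (G'_unit : G' \in unitmx).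

Lemma residual_row_change :
  (v i 0 - (G *m (invmx G' *m v')) i 0) * \det G'
  = ((G' *m (invmx G *m v)) i 0 - v' i 0) * \det G.
Proof.
set p := invmx G *m v; set p' := invmx G' *m v'.
set c := v i 0 - (G *m p') i 0.
set e : 'cV[F]_n := delta_mx i 0.
have G'p' : G' *m p' = v' by rewrite mulmxA mulmxV // mul1mx.
have Gp' : G *m p' = v - c *: e.
  apply/matrixP => j z; rewrite (ord1 z) ![in RHS]mxE eqxx andbT.
  have [->|ji] := eqVneq j i; first by rewrite mulr1 opprB addrC subrK.
  rewrite mulr0 subr0 eqv_off_i // -G'p' !mxE.
  by apply: eq_bigr => k _; rewrite eq_off_i.
have p'E : p' = p - c *: (invmx G *m e).
  by rewrite -(mulKmx G_unit p') Gp' mulmxBr scalemxAr.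
have G'w : (G' *m (invmx G *m e)) i 0 * \det G = \det G'.
  rewrite mulmxA -colE /invmx G_unit -scalemxAr 2!mxE mul_adj_row_change.
  by rewrite mulrAC mulVf ?mul1r // -unitfE -unitmxE.
have entryBZ (A B : 'cV[F]_n) a : (A - a *: B) i 0 = A i 0 - a * B i 0.
  by rewrite !mxE.
have : (G' *m p') i 0 = v' i 0 by rewrite G'p'.
rewrite p'E mulmxBr -scalemxAr entryBZ => <-.
by rewrite opprB addrC subrK -mulrA G'w.
Qed.

End RowChange.

Lemma exists_common_solution (R : realFieldType) n (G G' : 'M[R]_n)
    (v v' : 'cV[R]_n) (i : 'I_n) :
  (forall j k, j != i -> G j k = G' j k) ->
  (forall j, j != i -> v j 0 = v' j 0) ->
  0 < \det G -> 0 < \det G' ->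
  exists p, (p = invmx G *m v \/ p = invmx G' *m v') /\
    (forall r, v r 0 <= (G *m p) r 0) /\ (forall r, v' r 0 <= (G' *m p) r 0).
Proof.
move=> eqG eqv detG detG'.
have G_unit : G \in unitmx by rewrite unitmxE unitfE gt_eqF.
have G'_unit : G' \in unitmx by rewrite unitmxE unitfE gt_eqF.
have residual := @residual_row_change _ _ G G' i eqG v v' eqv G_unit G'_unit.
set p := invmx G *m v; set p' := invmx G' *m v'.
have Gp : G *m p = v by rewrite mulmxA mulmxV // mul1mx.
have G'p' : G' *m p' = v' by rewrite mulmxA mulmxV // mul1mx.
have off_i (q : 'cV[R]_n) r : r != i -> (G *m q) r 0 = (G' *m q) r 0.
  by move=> ri; rewrite !mxE; apply: eq_bigr => k _; rewrite eqG.
have [res_ge0|res_lt0] := lerP 0 ((G' *m p) i 0 - v' i 0).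
  exists p; split; [by left | split=> r; first by rewrite Gp].
  have [->|ri] := eqVneq r i; first by rewrite -subr_ge0.
  by rewrite -off_i // Gp eqv.
exists p'; split; [by right | split=> r; last by rewrite G'p'].
have [->|ri] := eqVneq r i; last by rewrite off_i // G'p' eqv.
rewrite -subr_le0 -(pmulr_lle0 _ detG') residual.
by rewrite pmulr_lle0 // ltW.
Qed.

Theorem lemma2 (R : rcfType) (N : nat) (K : 'I_N -> nat)
    (g : forall i : 'I_N, 'I_(K i) -> 'I_N -> R) (sigma2 : R)
    (hK : forall i, (0 < K i)%N)
    (hg : forall i (k : 'I_(K i)) j, 0 <= g i k j)
    (hgii : forall i (k : 'I_(K i)), 0 < g i k i)
    (hsigma : 0 < sigma2)
    (mu : 'I_N -> R) (hmu : forall i, 0 < mu i)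
    (khat ktil : forall i : 'I_N, 'I_(K i))
    (hdiff : exists i, khat i != ktil i /\ (forall j, j != i -> khat j = ktil j))
    (hirr1 : irreducible_mx (1%:M - Gmat g mu khat))
    (hirr2 : irreducible_mx (1%:M - Gmat g mu ktil))
    (hpf1 : PF_lt1 (1%:M - Gmat g mu khat))
    (hpf2 : PF_lt1 (1%:M - Gmat g mu ktil)) :
  let phat := invmx (Gmat g mu khat) *m nvec g sigma2 mu khat in
  let ptil := invmx (Gmat g mu ktil) *m nvec g sigma2 mu ktil in
  exists p, (p = phat \/ p = ptil) /\
    (forall r : 'I_N, nvec g sigma2 mu khat r 0 <= (Gmat g mu khat *m p) r 0) /\
    (forall r : 'I_N, nvec g sigma2 mu ktil r 0 <= (Gmat g mu ktil *m p) r 0).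
Proof.
move=> phat ptil; have [i [_ same_off_i]] := hdiff.
apply: (@exists_common_solution _ _ _ _ _ _ i).
- by move=> j k /same_off_i same_k; rewrite !mxE same_k.
- by move=> j /same_off_i same_k; rewrite !mxE same_k.
- exact: PF_lt1_det_gt0.
- exact: PF_lt1_det_gt0.
Qed.
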